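(* Let $p\in[1,\infty]$ and let the plant, controller operators, concatenated controller and update instants be as described in the context. Let $\bar\gamma>0$ and suppose that all operators $\mathcal{M}^{(i)}$, $i\ge 0$, satisfy $\gamma(\mathcal{M}^{(i)})\le\bar\gamma$. Suppose there exist a non-negative scalar sequence $\mathbf r=\{r^{(i)}\}_{i\ge1}\in\ell_p$ and thresholds $\epsilon^{(i)}>0$, $i\ge1$, such that $$\gamma(\mathcal F)\,\big(\gamma(\mathcal{M}^{(i)})+1\big)\,\epsilon^{(i)}\le r^{(i)}\qquad\forall i\ge1,$$ and suppose that every controller update is performed only when it is admissible, i.e. at every update instant $t_i$, $i\ge1$, $$|x_{t_i}|\le\epsilon^{(i)}.$$ Then for every disturbance sequence $\mathbf w\in\ell_p^n$, the closed-loop trajectories of the plant under the concatenated controller $\tilde{\mathcal M}$ satisfy $\mathbf x\in\ell_p^n$ and $\mathbf u\in\ell_p^m$; i.e. the resulting time-varying closed loop is $\ell_p$-stable.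
   Context: Notation: $\ell^n$ is the set of sequences $\mathbf v=(v_0,v_1,\dots)$ with $v_t\in\mathbb R^n$; $|\cdot|$ is a fixed vector norm; $\|\mathbf v\|_p=(\sum_t|v_t|^p)^{1/p}$ for $p<\infty$ and $\|\mathbf v\|_\infty=\sup_t|v_t|$; $\ell_p^n=\{\mathbf v\in\ell^n:\|\mathbf v\|_p<\infty\}$; $v_{a:b}=(v_a,\dots,v_b)$, and norms of finite segments are defined in the same way. An operator $\mathbf A:\ell^n\to\ell^m$ is causal if $(\mathbf A(\mathbf x))_t$ depends only on $x_{0:t}$. Plant: $x_t=f_{t-1}(x_{t-1},u_{t-1})+w_t$ for $t\ge1$, with $x_t\in\mathbb R^n$, $u_t\in\mathbb R^m$, and the convention $w_0=x_0$. Standing assumption on the plant (input-to-state operator $\mathcal F:(\mathbf u,\mathbf w)\mapsto\mathbf x$ with finite $\ell_p$-gain $\gamma(\mathcal F)$, where an initial state is treated as a disturbance impulse): for every starting time $s\ge0$, every state $x_s$, every $N\ge s$ and all input and disturbance sequences, the trajectory started from $x_s$ at time $s$ satisfies $\|x_{s:N}\|_p\le\gamma(\mathcal F)\,|x_s|+\gamma(\mathcal F)\big(\|u_{s:N}\|_p+\|w_{s:N}\|_p\big)$; in particular (for $s=0$, $x_0=w_0$) $\|x_{0:N}\|_p\le\gamma(\mathcal F)(\|u_{0:N}\|_p+\|w_{0:N}\|_p)$. Controller operators: each $\mathcal M^{(i)}:\ell^n\to\ell^m$, $i\ge0$, is a causal operator (e.g. a time-invariant dynamical system started at zero internal state) with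 finite $\ell_p$-gain $\gamma(\mathcal M^{(i)})>0$, in the sense that for every input sequence $\mathbf z$ and every $N\ge0$, $\|(\mathcal M^{(i)}(\mathbf z))_{0:N}\|_p\le\gamma(\mathcal M^{(i)})\|z_{0:N}\|_p$. Update instants: $t_0=0$, $t_{i+1}=t_i+\mu(x_{t_i})$ for $i\ge0$, where $\mu:\mathbb R^n\to\mathbb N_{\ge1}$ (finitely or infinitely many updates; if finitely many, the last window is infinite). Concatenated controller $\tilde{\mathcal M}$: for $t\in[t_i,t_{i+1})$, $u_t=(\mathcal M^{(i)}(\mathbf z^{(i)}))_{t-t_i}$, where $\mathbf z^{(i)}=(x_{t_i},w_{t_i+1},w_{t_i+2},\dots)$ and $\mathcal M^{(i)}$ is (re)initialized with zero internal state at time $t_i$. (For $i=0$, $\mathbf z^{(0)}=\mathbf w$ since $w_0=x_0$.) *)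

From HB Require Import structures.
From mathcomp Require Import all_boot all_order all_algebra.
From mathcomp Require Import reals ereal exp.
Set Implicit Arguments. Unset Strict Implicit. Unset Printing Implicit Defensive.
Import Order.TTheory GRing.Theory Num.Theory.
Local Open Scope ring_scope.

Section Defs.
Variable R : realType.

Definition is_vnorm (k : nat) (nrm : 'cV[R]_k -> R) : Prop :=
  [/\ forall x y, nrm (x + y) <= nrm x + nrm y,
      forall (a : R) x, nrm (a *: x) = `|a| * nrm x
    & forall x, nrm x = 0 -> x = 0].

(* ||g_{a:b}||_p for a scalar (nonnegative) sequence g, p \in [1,oo]
   represented in \bar R: finite p = r%:E uses (sum |.|^r)^(1/r),
   p = +oo uses the max.  (-oo is excluded by the hypothesis 1 <= p.) *)
Definition seg_norm (p : \bar R) (g : nat -> R) (a b : nat) : R :=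
  match p with
  | r%:E => powR (\sum_(a <= t < b.+1) powR (g t) r) r^-1
  | _ => \big[Num.max/0]_(a <= t < b.+1) g t
  end.

(* ||g||_p < oo, i.e. the partial norms ||g_{0:N}||_p are bounded
   (they are nondecreasing in N, ||g||_p being their supremum). *)
Definition lp_seq (p : \bar R) (g : nat -> R) : Prop :=
  exists C : R, forall N, seg_norm p g 0 N <= C.

Fixpoint ptraj (n m : nat) (f : nat -> 'cV[R]_n -> 'cV[R]_m -> 'cV[R]_n)
  (s : nat) (xs : 'cV[R]_n) (u : nat -> 'cV[R]_m) (w : nat -> 'cV[R]_n)
  (t : nat) : 'cV[R]_n :=
  match t with
  | 0 => xs
  | t'.+1 => if (s <= t')%N then f t' (ptraj f s xs u w t') (u t') + w t'.+1
             else xs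
  end.

Definition plant_gain (n m : nat) (p : \bar R) (nx : 'cV[R]_n -> R)
  (nu : 'cV[R]_m -> R) (f : nat -> 'cV[R]_n -> 'cV[R]_m -> 'cV[R]_n)
  (gF : R) : Prop :=
  forall (s : nat) (xs : 'cV[R]_n) (u : nat -> 'cV[R]_m)
         (w : nat -> 'cV[R]_n) (N : nat), (s <= N)%N ->
    seg_norm p (fun t => nx (ptraj f s xs u w t)) s N
      <= gF * nx xs + gF * (seg_norm p (fun t => nu (u t)) s N
                            + seg_norm p (fun t => nx (w t)) s N).

Definition causal (n m : nat) (M : (nat -> 'cV[R]_n) -> nat -> 'cV[R]_m)
  : Prop :=
  forall z z' t, (forall k, (k <= t)%N -> z k = z' k) -> M z t = M z' t.

Definition op_gain (n m : nat) (p : \bar R) (nx : 'cV[R]_n -> R)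
  (nu : 'cV[R]_m -> R) (M : (nat -> 'cV[R]_n) -> nat -> 'cV[R]_m) (g : R)
  : Prop :=
  forall z N, seg_norm p (fun t => nu (M z t)) 0 N
              <= g * seg_norm p (fun t => nx (z t)) 0 N.

Definition zseq (n : nat) (xti : 'cV[R]_n) (ti : nat) (w : nat -> 'cV[R]_n)
  : nat -> 'cV[R]_n :=
  fun k => if k is 0 then xti else w (ti + k)%N.

Section ClosedLoop.
Variables (n m : nat).
Variable f : nat -> 'cV[R]_n -> 'cV[R]_m -> 'cV[R]_n.
Variable M : nat -> (nat -> 'cV[R]_n) -> nat -> 'cV[R]_m.
(* mu x = Some k : next update k >= 1 steps later; None : no further update
   (last window infinite). *)
Variable mu : 'cV[R]_n -> option nat.
Variable w : nat -> 'cV[R]_n.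

(* closed-loop state at time t: (x_t, current window index i, t_i, x_{t_i}) *)
Fixpoint cl_state (t : nat) : 'cV[R]_n * nat * nat * 'cV[R]_n :=
  match t with
  | 0 => (w 0, 0%N, 0%N, w 0)
  | t'.+1 =>
      let: (x, i, ti, xti) := cl_state t' in
      let u := M i (zseq xti ti w) (t' - ti)%N in
      let x' := f t' x u + w t'.+1 in
      match mu xti with
      | Some k => if (ti + k == t'.+1)%N then (x', i.+1, t'.+1, x')
                  else (x', i, ti, xti)
      | None => (x', i, ti, xti)
      end
  end.

Definition cl_x (t : nat) : 'cV[R]_n := (cl_state t).1.1.1.

Definition cl_u (t : nat) : 'cV[R]_m :=
  let: (_, i, ti, xti) := cl_state t in M i (zseq xti ti w) (t - ti)%N.

Fixpoint upd_time (i : nat) : option nat :=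
  match i with
  | 0 => Some 0%N
  | i'.+1 => match upd_time i' with
             | Some ti => match mu (cl_x ti) with
                          | Some k => Some (ti + k)%N
                          | None => None
                          end
             | None => None
             end
  end.
End ClosedLoop.
End Defs.

From mathcomp Require Import all_boot all_order all_algebra.
From mathcomp Require Import reals ereal exp.
From mathcomp Require Import lra ring.

(* On the window [t_i, N] of the i-th controller the plant gain, applied from
   the state x_{t_i}, and the gain of M^(i), applied to
   z^(i) = (x_{t_i}, w_{t_i+1}, ...), bound the l_p norms of x and u on the
   window by a multiple of |x_{t_i}| + ||w_{t_i:N}||_p.  Admissibility turns
   gF (gM_i + 1) |x_{t_i}| into at most r^(i) (and x_0 = w_0 is part of w), so
   both are at most 2 r^(i) + D ||w_{t_i:N}||_p with D independent of i.  For
   p < oo, raising to the p-th power and summing over the windows gives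
   ||x_{0:N}||_p^p <= K (||r||_p^p + ||w||_p^p); for p = oo the window bound is
   already uniform. *)

Set Implicit Arguments.
Unset Strict Implicit.
Unset Printing Implicit Defensive.

Import Order.TTheory GRing.Theory Num.Theory.
Local Open Scope ring_scope.

Section RealPowers.
Variable R : realType.
Implicit Types q s x y a b c P : R.

Lemma powRK q x : 0 < q -> 0 <= x -> (x `^ q) `^ q^-1 = x.
Proof. by move=> q0 x0; rewrite -powRrM mulfV ?gt_eqF // powRr1. Qed.

Lemma powRVK q x : 0 < q -> 0 <= x -> (x `^ q^-1) `^ q = x.
Proof. by move=> q0 x0; rewrite -powRrM mulVf ?gt_eqF // powRr1. Qed.

Lemma le_powR s x y : 0 <= s -> 0 <= x -> x <= y -> x `^ s <= y `^ s.
Proof.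
move=> s0 x0 xy; apply: (ge0_ler_powR s0) => //; rewrite nnegrE //.
exact: le_trans xy.
Qed.

Lemma powRV_le q P c : 0 < q -> 0 <= P -> 0 <= c -> (P `^ q^-1 <= c) = (P <= c `^ q).
Proof.
move=> q0 P0 c0; apply/idP/idP => h.
- by rewrite -(powRVK q0 P0); apply: le_powR (ltW q0) (powR_ge0 _ _) h.
- rewrite -(powRK q0 c0); apply: le_powR => //; by rewrite invr_ge0 ltW.
Qed.

Lemma powRD_le q a b : 1 <= q -> 0 <= a -> 0 <= b ->
  (a + b) `^ q <= 2 `^ q * (a `^ q + b `^ q).
Proof.
move=> q1 a0 b0; have q0 : 0 <= q by lra.
have ha := powR_ge0 a q; have hb := powR_ge0 b q; have h2 := powR_ge0 2 q.
wlog ab : a b a0 b0 ha hb / a <= b.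
  move=> hw; have [/hw|/ltW ba] := leP a b; first exact.
  by rewrite addrC [_ `^ q + _]addrC; apply: hw.
apply: (@le_trans _ _ ((2 * b) `^ q)); first by apply: le_powR => //; lra.
by rewrite powRM //; apply: ler_wpM2l => //; lra.
Qed.

Lemma powR_add_le q a b : 1 <= q -> 0 <= a -> 0 <= b ->
  a `^ q + b `^ q <= (2 * (a + b)) `^ q.
Proof.
move=> q1 a0 b0; have q0 : 0 <= q by lra.
have h1 : a `^ q <= (a + b) `^ q by apply: le_powR => //; lra.
have h2 : b `^ q <= (a + b) `^ q by apply: le_powR => //; lra.
have h3 : 2 <= 2 `^ q by apply: le1r_powR => //; lra.
have h4 := powR_ge0 (a + b) q.
rewrite powRM //; last lra.
nra.
Qed.

End RealPowers.

Definition psum (R : realType) (q : R) (g : nat -> R) (a b : nat) : R :=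
  \sum_(a <= t < b.+1) g t `^ q.

Lemma psum_ge0 (R : realType) (q : R) g a b : 0 <= psum q g a b.
Proof. by apply: sumr_ge0 => t _; exact: powR_ge0. Qed.

Lemma psum_split (R : realType) (q : R) g a b c : (a <= b <= c)%N ->
  psum q g a c = psum q g a b + psum q g b.+1 c.
Proof. by case/andP=> ab bc; rewrite /psum (big_cat_nat _ (n := b.+1)) // leqW. Qed.

Lemma sum_ge_elem (R : realType) (F : nat -> R) a b t :
  (forall i, 0 <= F i) -> (a <= t <= b)%N -> F t <= \sum_(a <= i < b.+1) F i.
Proof.
move=> F0 /andP[le_at le_tb].
rewrite (big_cat_nat _ (n := t)) ?leqW //= (@big_ltn _ _ _ t) //.
have : 0 <= \sum_(a <= i < t) F i by apply: sumr_ge0.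
have : 0 <= \sum_(t.+1 <= i < b.+1) F i by apply: sumr_ge0.
lra.
Qed.

Section SegNorm.
Variables (R : realType) (p : \bar R).
Hypothesis p_ge1 : (1%:E <= p)%E.
Implicit Types g h : nat -> R.

Lemma seg_norm_ge0 g a b : 0 <= seg_norm p g a b.
Proof. by case: p => [q| |] /=; rewrite ?powR_ge0 // bigmax_ge_id. Qed.

Lemma eq_seg_norm g h a b : (forall t, (a <= t <= b)%N -> g t = h t) ->
  seg_norm p g a b = seg_norm p h a b.
Proof.
move=> gh; have {}gh t : (a <= t < b.+1)%N -> g t = h t by rewrite ltnS => /gh.
case: p => [q| |] /=; last 2 first.
- by apply: eq_big_nat => t /gh ->.
- by apply: eq_big_nat => t /gh ->.
by congr (_ `^ _); apply: eq_big_nat => t /gh ->.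
Qed.

Lemma seg_norm_shift g a b : (a <= b)%N ->
  seg_norm p g a b = seg_norm p (fun k => g (k + a)%N) 0 (b - a).
Proof.
by move=> ab; case: p => [q| |] /=; rewrite -{1}[a]add0n big_addn subSn.
Qed.

Lemma seg_norm_ge g a b t : 0 <= g t -> (a <= t <= b)%N -> g t <= seg_norm p g a b.
Proof.
move=> g0 tab; case: p p_ge1 => [q| |] //= hp.
- rewrite lee_fin in hp; have q0 : 0 < q by lra.
  rewrite -{1}(powRK q0 g0); apply: le_powR; first by rewrite invr_ge0 ltW.
    exact: powR_ge0.
  by apply: (sum_ge_elem (F := fun i => g i `^ q)) => // i; exact: powR_ge0.
- by apply: le_bigmax_seq => //; rewrite mem_index_iota ltnS.
Qed.

Lemma seg_norm_widen g a' a b : (a' <= a <= b.+1)%N ->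
  seg_norm p g a b <= seg_norm p g a' b.
Proof.
move=> /andP[a'a ab]; case: p p_ge1 => [q| |] //= hp; last exact: le_bigmax_nat.
rewrite lee_fin in hp; apply: le_powR; first by rewrite invr_ge0; lra.
  exact: psum_ge0.
rewrite [X in _ <= X](big_cat_nat _ (n := a)) //=.
have : 0 <= \sum_(a' <= i < a) g i `^ q by apply: sumr_ge0 => i _; exact: powR_ge0.
lra.
Qed.

Lemma seg_norm1 g a : 0 <= g a -> seg_norm p g a a = g a.
Proof.
move=> g0; case: p p_ge1 => [q| |] //= hp.
- rewrite lee_fin in hp; have q0 : 0 < q by lra.
  by rewrite big_nat1 powRK.
- by rewrite big_ltn // big_geq //; apply/max_idPl.
Qed.

Lemma seg_norm_eq0 g a b : (forall t, (a <= t <= b)%N -> g t = 0) ->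
  seg_norm p g a b = 0.
Proof.
move=> g0; rewrite (eq_seg_norm g0); case: p p_ge1 => [q| |] //= hp.
- rewrite lee_fin in hp; have q0 : 0 < q by lra.
  by rewrite powR0 ?gt_eqF // big1 // powR0 // invr_eq0 gt_eqF.
- by elim/big_rec: _ => // i x _ ->; rewrite maxxx.
Qed.

End SegNorm.

Lemma psum_le_of_seg_norm (R : realType) (q c D : R) (v g : nat -> R) a b :
  1 <= q -> 0 <= c -> 0 <= D ->
  seg_norm q%:E v a b <= 2 * c + D * seg_norm q%:E g a b ->
  psum q v a b <= 2 `^ q * (2 `^ q + D `^ q) * (c `^ q + psum q g a b).
Proof.
move=> q1 c0 D0; have q0 : 0 < q by lra.
rewrite /= -!/(psum _ _ _ _); set B := psum q g a b `^ q^-1 => h.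
have B0 : 0 <= B := powR_ge0 _ _.
have two0 : (0 : R) <= 2 by [].
have {}h : psum q v a b <= (2 * c + D * B) `^ q.
  by rewrite -powRV_le // ?psum_ge0 // addr_ge0 // mulr_ge0.
apply: (le_trans h); apply: (le_trans (powRD_le q1 _ _)); [exact: mulr_ge0..|].
rewrite !powRM // /B powRVK ?psum_ge0 // -mulrA; apply: ler_wpM2l; first exact: powR_ge0.
have := powR_ge0 2 q; have := powR_ge0 D q; have := powR_ge0 c q.
have := psum_ge0 q g a b; nra.
Qed.

Section WindowSum.
Variables (R : realType) (idx tst : nat -> nat) (v g rho : nat -> R) (D : R).
Hypotheses (D_ge0 : 0 <= D) (v_ge0 : forall t, 0 <= v t)
  (rho_ge0 : forall i, 0 <= rho i) (rho0 : rho 0%N = 0)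
  (tst_le : forall N, (tst N <= N)%N)
  (tst_prev : forall N, tst N = 0%N \/ (idx (tst N).-1).+1 = idx N).

Lemma psum_window_prefix q : 1 <= q ->
    (forall N, seg_norm q%:E v (tst N) N <= 2 * rho (idx N) + D * seg_norm q%:E g (tst N) N) ->
  forall N, psum q v 0 N <= 2 `^ q * (2 `^ q + D `^ q) * (psum q rho 0 (idx N) + psum q g 0 N).
Proof.
move=> q1 win; set K := _ * _.
have K0 : 0 <= K by rewrite mulr_ge0 ?addr_ge0 ?powR_ge0.
elim/ltn_ind => N IH.
have {}win := psum_le_of_seg_norm q1 (rho_ge0 _) D_ge0 (win N).
have last_rho : rho (idx N) `^ q <= psum q rho 0 (idx N).
  by apply: (sum_ge_elem (F := fun j => rho j `^ q)) => [j|]; rewrite ?powR_ge0 ?leqnn.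
case E: (tst N) win => [|t] win.
  apply: (le_trans win); apply: ler_wpM2l => //.
  by have := psum_ge0 q g 0 N; lra.
have tN : (t < N)%N by rewrite -E tst_le.
have idxN : (idx t).+1 = idx N by case: (tst_prev N); rewrite E.
have tN' : (0 <= t <= N)%N := ltnW tN.
have rho_split : psum q rho 0 (idx N) = psum q rho 0 (idx t) + rho (idx N) `^ q.
  by rewrite /psum -idxN big_nat_recr.
rewrite (psum_split q v tN') (psum_split q g tN') rho_split.
apply: le_trans (lerD (IH t tN) win) _; rewrite -mulrDr; apply: ler_wpM2l => //.
by rewrite -/K; lra.
Qed.

Lemma psum_le_of_shift q Cr : 1 <= q ->
  (forall i, seg_norm q%:E (fun i => rho i.+1) 0 i <= Cr) ->
  forall i, psum q rho 0 i <= Cr `^ q.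
Proof.
move=> q1 hCr i; have q0 : 0 < q by lra.
have Cr0 : 0 <= Cr := le_trans (seg_norm_ge0 _ _ _ _) (hCr 0%N).
have : psum q (fun j => rho j.+1) 0 i <= Cr `^ q.
  by rewrite -powRV_le ?psum_ge0 //; exact: hCr.
apply: le_trans.
rewrite /psum big_nat_recl // rho0 powR0 ?gt_eqF // add0r big_nat_recr //=.
have := powR_ge0 (rho i.+1) q; lra.
Qed.

Lemma lp_seq_window_fin q : 1 <= q ->
    (forall N, seg_norm q%:E v (tst N) N <= 2 * rho (idx N) + D * seg_norm q%:E g (tst N) N) ->
  lp_seq q%:E g -> lp_seq q%:E (fun i => rho i.+1) -> lp_seq q%:E v.
Proof.
move=> q1 win [Cw hCw] [Cr hCr]; have q0 : 0 < q by lra.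
have Cw0 : 0 <= Cw := le_trans (seg_norm_ge0 _ _ _ _) (hCw 0%N).
have Bw N : psum q g 0 N <= Cw `^ q by rewrite -powRV_le ?psum_ge0 //; exact: hCw.
have Br := psum_le_of_shift q1 hCr.
exists ((2 `^ q * (2 `^ q + D `^ q) * (Cr `^ q + Cw `^ q)) `^ q^-1) => N /=.
apply: le_powR; [by rewrite invr_ge0 ltW | exact: psum_ge0 |].
apply: (le_trans (psum_window_prefix q1 win N)); apply: ler_wpM2l.
  by rewrite mulr_ge0 ?addr_ge0 ?powR_ge0.
exact: lerD.
Qed.

Lemma lp_seq_window_inf :
    (forall N, seg_norm +oo%E v (tst N) N <= 2 * rho (idx N) + D * seg_norm +oo%E g (tst N) N) ->
  lp_seq +oo%E g -> lp_seq +oo%E (fun i => rho i.+1) -> lp_seq +oo%E v.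
Proof.
have p_ge1 : (1%:E <= +oo :> \bar R)%E := leey _.
move=> win [Cw hCw] [Cr hCr].
have Cw0 : 0 <= Cw := le_trans (seg_norm_ge0 _ _ _ _) (hCw 0%N).
have Cr0 : 0 <= Cr := le_trans (seg_norm_ge0 _ _ _ _) (hCr 0%N).
exists (2 * Cr + D * Cw) => N /=.
apply: bigmax_le => [|t _]; first by rewrite addr_ge0 ?mulr_ge0.
have t_win : (tst t <= t <= t)%N by rewrite tst_le leqnn.
apply: (le_trans (seg_norm_ge p_ge1 (v_ge0 t) t_win)).
apply: (le_trans (win t)); apply: lerD; apply: ler_wpM2l => //.
- case: (idx t) => [|j]; first by rewrite rho0.
  apply: le_trans (hCr j).
  by apply: (seg_norm_ge p_ge1 (g := fun i => rho i.+1)); rewrite ?leqnn.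
- apply: le_trans (hCw t); apply: (seg_norm_widen p_ge1).
  exact: leqW (tst_le t).
Qed.

Lemma lp_seq_of_window_bounds p : (1%:E <= p)%E ->
    (forall N, seg_norm p v (tst N) N <= 2 * rho (idx N) + D * seg_norm p g (tst N) N) ->
  lp_seq p g -> lp_seq p (fun i => rho i.+1) -> lp_seq p v.
Proof.
case: p => [q| |] p_ge1.
- by apply: lp_seq_window_fin; rewrite -lee_fin.
- exact: lp_seq_window_inf.
- by rewrite leeNy_eq in p_ge1.
Qed.

End WindowSum.

Section ClosedLoopWindows.
Variables (R : realType) (n m : nat).
Variable f : nat -> 'cV[R]_n -> 'cV[R]_m -> 'cV[R]_n.
Variable M : nat -> (nat -> 'cV[R]_n) -> nat -> 'cV[R]_m.
Variable mu : 'cV[R]_n -> option nat.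
Variable w : nat -> 'cV[R]_n.

(* At time t the loop runs controller number [cl_index t] = i, started at the
   update instant [cl_start t] = t_i from the state [cl_xstart t] = x_{t_i}. *)
Definition cl_index t := (cl_state f M mu w t).1.1.2.
Definition cl_start t := (cl_state f M mu w t).1.2.
Definition cl_xstart t := (cl_state f M mu w t).2.

Definition window_u N t :=
  M (cl_index N) (zseq (cl_xstart N) (cl_start N) w) (t - cl_start N).

Lemma cl_xS t :
  cl_x f M mu w t.+1 = f t (cl_x f M mu w t) (cl_u f M mu w t) + w t.+1.
Proof.
rewrite /cl_x /cl_u /=; case: (cl_state f M mu w t) => [[[x i] ti] xti] /=.
by case: (mu xti) => [k|] //=; case: ifP.
Qed.

Lemma cl_uE t : cl_u f M mu w t = window_u t t.
Proof.
by rewrite /cl_u /window_u /cl_index /cl_xstart /cl_start;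
  case: (cl_state f M mu w t) => [[[x i] ti] xti].
Qed.

Lemma cl_state_step t :
  [/\ cl_index t.+1 = cl_index t, cl_start t.+1 = cl_start t
    & cl_xstart t.+1 = cl_xstart t] \/
  [/\ cl_index t.+1 = (cl_index t).+1, cl_start t.+1 = t.+1,
      cl_xstart t.+1 = cl_x f M mu w t.+1
    & exists2 k, mu (cl_xstart t) = Some k & (cl_start t + k)%N = t.+1].
Proof.
rewrite /cl_index /cl_start /cl_xstart /cl_x /=.
case: (cl_state f M mu w t) => [[[x i] ti] xti] /=.
case E: (mu xti) => [k|]; last by left.
by case: ifP => [/eqP h|_]; [right; split => //; exists k | left].
Qed.

Lemma cl_window N :
  [/\ (cl_start N <= N)%N,
      upd_time f M mu w (cl_index N) = Some (cl_start N),
      cl_xstart N = cl_x f M mu w (cl_start N),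
      (forall t, (cl_start N <= t <= N)%N ->
         [/\ cl_index t = cl_index N, cl_start t = cl_start N
           & cl_xstart t = cl_xstart N])
    & cl_start N = 0%N \/ (cl_index (cl_start N).-1).+1 = cl_index N].
Proof.
elim: N => [|N [le_sN upd xs same prev]].
  by split => //; [move=> t; rewrite leqn0 => /eqP -> | left].
case: (cl_state_step N) => [[e1 e2 e3]|[e1 e2 e3 [k ek ek2]]].
- rewrite e1 e2 e3; split => //; first exact: leqW.
  move=> t /andP[le_st]; rewrite leq_eqVlt => /orP[/eqP ->|tN]; first by [].
  by apply: same; rewrite le_st -ltnS.
- rewrite e1 e2 e3; split => //; first by rewrite /= upd -xs ek ek2.
  + by move=> t; rewrite -eqn_leq => /eqP <-.
  + by right.
Qed.

Lemma ptraj_start s xs (u : nat -> 'cV[R]_m) :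
  ptraj f s xs u w s = xs.
Proof. by case: s => //= s; rewrite ltnn. Qed.

Lemma cl_u_window N t : (cl_start N <= t <= N)%N ->
  cl_u f M mu w t = window_u N t.
Proof.
move=> ht; have [_ _ _ same _] := cl_window N.
by have [e1 e2 e3] := same t ht; rewrite cl_uE /window_u e1 e2 e3.
Qed.

Lemma cl_x_window N t : (cl_start N <= t <= N)%N ->
  cl_x f M mu w t = ptraj f (cl_start N) (cl_xstart N) (window_u N) w t.
Proof.
have [_ _ xs _ _] := cl_window N.
move=> /andP[le_st]; rewrite -(subnKC le_st).
elim: (t - cl_start N)%N => [|d IH] tN; first by rewrite addn0 ptraj_start xs.
have le_dN : (cl_start N + d <= N)%N by apply: ltnW; rewrite -addnS.
rewrite addnS cl_xS /= leq_addr IH // (cl_u_window (N := N)) //.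
by rewrite leq_addr.
Qed.

End ClosedLoopWindows.

Section Norms.
Variables (R : realType) (k : nat) (nrm : 'cV[R]_k -> R).
Hypothesis nrm_norm : is_vnorm nrm.

Lemma vnorm0 : nrm 0 = 0.
Proof. by case: nrm_norm => _ hZ _; have := hZ 0 0; rewrite scale0r normr0 mul0r. Qed.

Lemma vnorm_ge0 x : 0 <= nrm x.
Proof.
case: nrm_norm => hT hZ _; have := hT x (- x).
by rewrite subrr vnorm0 -scaleN1r hZ normrN normr1 mul1r; lra.
Qed.

End Norms.

(* Stands in for [1 <= gF], which the gain assumption does not force when [nx]
   vanishes identically. *)
Lemma plant_gain_norm_le (R : realType) n m (p : \bar R) nx nu
    (f : nat -> 'cV[R]_n -> 'cV[R]_m -> 'cV[R]_n) gF :
  (1%:E <= p)%E -> is_vnorm nx -> is_vnorm nu -> plant_gain p nx nu f gF ->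
  forall x, nx x <= gF * nx x.
Proof.
move=> p_ge1 hnx hnu hF x; have := hF 0%N x (fun=> 0) (fun=> 0) 0%N (leqnn 0).
rewrite (seg_norm1 p_ge1 (vnorm_ge0 hnx _)) /=.
rewrite (seg_norm_eq0 p_ge1 (g := fun=> nu 0)) => [|t _]; last exact: vnorm0.
rewrite (seg_norm_eq0 p_ge1 (g := fun=> nx 0)) => [|t _]; last exact: vnorm0.
by rewrite addr0 mulr0 addr0.
Qed.

Lemma seg_norm_zseq_le (R : realType) n (p : \bar R) (nx : 'cV[R]_n -> R) x0 s w K :
  (1%:E <= p)%E -> (forall x, 0 <= nx x) ->
  seg_norm p (fun k => nx (zseq x0 s w k)) 0 K
  <= 2 * (nx x0 + seg_norm p (fun t => nx (w t)) s (s + K)).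
Proof.
move=> p_ge1 nx0; have sw0 := seg_norm_ge0 p (fun t => nx (w t)) s (s + K).
have x00 := nx0 x0.
case: p p_ge1 sw0 => [q| |] p_ge1 sw0; last by rewrite leeNy_eq in p_ge1.
- rewrite lee_fin in p_ge1; have q0 : 0 < q by lra.
  rewrite /= -!/(psum _ _ _ _) in sw0 *.
  rewrite powRV_le ?psum_ge0 ?mulr_ge0 ?addr_ge0 //.
  apply: le_trans (powR_add_le p_ge1 x00 sw0).
  rewrite powRVK ?psum_ge0 // /psum big_nat_recl //= big_nat_recl ?leq_addr //=.
  have -> : \sum_(s <= i < s + K) nx (w i.+1) `^ q
          = \sum_(0 <= i < K) nx (w (s + i.+1)%N) `^ q.
    rewrite -{1}[s]add0n big_addn addKn.
    by apply: eq_big_nat => i _; rewrite addnS addnC.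
  by have := powR_ge0 (nx (w s)) q; lra.
- rewrite {1}/seg_norm big_seq; apply: bigmax_le => [|i]; first lra.
  rewrite mem_index_iota ltnS; case: i => [_|k /= kK]; first by rewrite /zseq; lra.
  have : nx (w (s + k.+1)%N) <= seg_norm +oo%E (fun t => nx (w t)) s (s + K).
    by apply: seg_norm_ge => //; rewrite leq_addr leq_add2l.
  have := nx0 (w (s + k.+1)%N); rewrite /zseq /=; lra.
Qed.

Lemma window_arith (R : realType) (gF g gbar a e sw su sx c : R) :
  0 <= g -> g <= gbar -> 0 <= a -> a <= gF * a -> a <= e ->
  gF * (g + 1) * e <= c -> 0 <= c -> 0 <= sw -> 0 <= su ->
  su <= 2 * g * (a + sw) -> sx <= gF * a + gF * (su + sw) ->
  sx <= 2 * c + 2 * (gbar + 1) * (`|gF| + 1) * sw /\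
  su <= 2 * c + 2 * (gbar + 1) * (`|gF| + 1) * sw.
Proof.
move=> g0 ggbar a0 a_le ae gFe c0 sw0 su0 hsu hsx.
have [gF0|gF_lt0] := lerP 0 gF; last first.
  have a_eq0 : a = 0 by nra.
  have hD : g <= (gbar + 1) * (`|gF| + 1).
    by have := normr_ge0 gF; nra.
  have : g * sw <= (gbar + 1) * (`|gF| + 1) * sw by rewrite ler_wpM2r.
  have : gF * su <= 0 by nra.
  have : gF * sw <= 0 by nra.
  move: hsu hsx; rewrite a_eq0 mulr0 add0r => hsu hsx.
  split; nra.
have gFa : gF * (g + 1) * a <= c.
  by apply: le_trans gFe; rewrite ler_wpM2l // mulr_ge0 //; lra.
rewrite ger0_norm //.
have e1 : g * a <= g * (gF * a) by rewrite ler_wpM2l.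
have e2 : gF * su <= gF * (2 * g * (a + sw)) by rewrite ler_wpM2l.
have e3 : (2 * g + 1) * (gF * sw) <= 2 * (gbar + 1) * (gF + 1) * sw.
  have : 0 <= gF * sw by rewrite mulr_ge0.
  have : 0 <= g * sw by rewrite mulr_ge0.
  have : g * (gF * sw) <= gbar * (gF * sw) by rewrite ler_wpM2r // mulr_ge0.
  nra.
have e4 : g * sw <= gbar * sw by rewrite ler_wpM2r.
have : 0 <= gF * a by rewrite mulr_ge0.
have : 0 <= gF * sw by rewrite mulr_ge0.
split; nra.
Qed.

Section ClosedLoopBounds.
Variables (R : realType) (n m : nat) (p : \bar R).
Variables (nx : 'cV[R]_n -> R) (nu : 'cV[R]_m -> R).
Variables (f : nat -> 'cV[R]_n -> 'cV[R]_m -> 'cV[R]_n) (gF : R).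
Variables (M : nat -> (nat -> 'cV[R]_n) -> nat -> 'cV[R]_m) (gM : nat -> R) (gbar : R).
Variables (mu : 'cV[R]_n -> option nat) (w : nat -> 'cV[R]_n) (rho eps : nat -> R).
Hypotheses (p_ge1 : (1%:E <= p)%E) (hnx : is_vnorm nx) (hnu : is_vnorm nu).
Hypotheses (hF : plant_gain p nx nu f gF) (hM : forall i, op_gain p nx nu (M i) (gM i)).
Hypotheses (gM_ge0 : forall i, 0 <= gM i) (gM_le : forall i, gM i <= gbar).
Hypotheses (rho_ge0 : forall i, 0 <= rho i)
  (budget : forall i, (1 <= i)%N -> gF * (gM i + 1) * eps i <= rho i).
Hypothesis admissible : forall i ti, (1 <= i)%N -> upd_time f M mu w i = Some ti ->
  nx (cl_x f M mu w ti) <= eps i.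

Local Notation ts := (cl_start f M mu w).
Local Notation ix := (cl_index f M mu w).
Local Notation xs := (cl_xstart f M mu w).
Local Notation seg_x N := (seg_norm p (fun t => nx (cl_x f M mu w t)) (ts N) N).
Local Notation seg_u N := (seg_norm p (fun t => nu (cl_u f M mu w t)) (ts N) N).
Local Notation seg_w N := (seg_norm p (fun t => nx (w t)) (ts N) N).

Lemma cl_u_window_le N : seg_u N <= 2 * gM (ix N) * (nx (xs N) + seg_w N).
Proof.
have [le_sN _ _ _ _] := cl_window f M mu w N.
rewrite (eq_seg_norm p (h := fun t => nu (window_u f M mu w N t))); last first.
  by move=> t ht; rewrite (cl_u_window ht).
rewrite seg_norm_shift //= /window_u.
rewrite (eq_seg_norm p (h := fun k => nu (M (ix N) (zseq (xs N) (ts N) w) k)));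
  last by move=> k _; rewrite addnK.
apply: (le_trans (hM _ _ _)); rewrite -mulrA mulrCA; apply: ler_wpM2l => //.
have := seg_norm_zseq_le (xs N) (ts N) w (N - ts N) p_ge1 (vnorm_ge0 hnx).
by rewrite subnKC.
Qed.

Lemma cl_x_window_le N : seg_x N <= gF * nx (xs N) + gF * (seg_u N + seg_w N).
Proof.
rewrite (eq_seg_norm p (g := fun t => nx (cl_x f M mu w t))
  (h := fun t => nx (ptraj f (ts N) (xs N) (window_u f M mu w N) w t))); last first.
  by move=> t ht; rewrite (cl_x_window ht).
rewrite (eq_seg_norm p (g := fun t => nu (cl_u f M mu w t))
  (h := fun t => nu (window_u f M mu w N t))); last first.
  by move=> t ht; rewrite (cl_u_window ht).
by apply: hF; have [] := cl_window f M mu w N.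
Qed.

Lemma cl_window_bound N :
  seg_x N <= 2 * rho (ix N) + 4 * (gbar + 1) * (`|gF| + 1) * seg_w N /\
  seg_u N <= 2 * rho (ix N) + 4 * (gbar + 1) * (`|gF| + 1) * seg_w N.
Proof.
have [_ upd xsE _ _] := cl_window f M mu w N.
set D := 2 * (gbar + 1) * (`|gF| + 1).
have -> : 4 * (gbar + 1) * (`|gF| + 1) = 2 * D by rewrite /D; ring.
have D0 : 0 <= D by rewrite !mulr_ge0 ?addr_ge0 // (le_trans (gM_ge0 0)).
have sw0 := seg_norm_ge0 p (fun t => nx (w t)) (ts N) N.
have arith := window_arith (gM_ge0 (ix N)) (gM_le (ix N)) (vnorm_ge0 hnx (xs N))
  (plant_gain_norm_le p_ge1 hnx hnu hF (xs N)) _ _ _ sw0 (seg_norm_ge0 _ _ _ _)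
  (cl_u_window_le N) (cl_x_window_le N).
case E: (ix N) upd arith => [|j] upd arith.
- have ts0 : ts N = 0%N by case: upd.
  have xs_sw : nx (xs N) <= seg_w N.
    by rewrite xsE ts0; apply: seg_norm_ge; rewrite ?vnorm_ge0.
  have gbar1 : 0 <= gbar + 1 by have := le_trans (gM_ge0 0) (gM_le 0); lra.
  have budget0 : gF * (gM 0 + 1) * seg_w N <= `|gF| * (gbar + 1) * seg_w N.
    rewrite ler_wpM2r //; have := ler_norm gF; have := normr_ge0 gF.
    have := gM_ge0 0; have := gM_le 0; nra.
  have c0 : 0 <= `|gF| * (gbar + 1) * seg_w N by rewrite !mulr_ge0.
  have [hx hu] := arith _ _ xs_sw budget0 c0.
  have : 0 <= (gbar + 1) * seg_w N by rewrite mulr_ge0.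
  have := rho_ge0 0; rewrite /D in hx hu *; split; lra.
- have adm : nx (xs N) <= eps j.+1 by rewrite xsE; apply: admissible.
  have [hx hu] := arith _ _ adm (budget (ltn0Sn j)) (rho_ge0 _).
  by have := mulr_ge0 D0 sw0; rewrite /D in hx hu *; split; lra.
Qed.

End ClosedLoopBounds.

Theorem theorem2 (R : realType) (n m : nat) (p : \bar R)
  (nx : 'cV[R]_n -> R) (nu : 'cV[R]_m -> R)
  (f : nat -> 'cV[R]_n -> 'cV[R]_m -> 'cV[R]_n) (gF : R)
  (M : nat -> (nat -> 'cV[R]_n) -> nat -> 'cV[R]_m) (gM : nat -> R)
  (gbar : R) (mu : 'cV[R]_n -> option nat) (r eps : nat -> R) :
  (1%:E <= p)%E ->
  is_vnorm nx -> is_vnorm nu ->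
  plant_gain p nx nu f gF ->
  (forall i, causal (M i)) ->
  (forall i, 0 < gM i) ->
  (forall i, op_gain p nx nu (M i) (gM i)) ->
  0 < gbar ->
  (forall i, gM i <= gbar) ->
  (forall x k, mu x = Some k -> (1 <= k)%N) ->
  (forall i, (1 <= i)%N -> 0 <= r i) ->
  lp_seq p (fun i => `|r i.+1|) ->
  (forall i, (1 <= i)%N -> 0 < eps i) ->
  (forall i, (1 <= i)%N -> gF * (gM i + 1) * eps i <= r i) ->
  forall w : nat -> 'cV[R]_n,
    lp_seq p (fun t => nx (w t)) ->
    (forall i ti, (1 <= i)%N -> upd_time f M mu w i = Some ti ->
                  nx (cl_x f M mu w ti) <= eps i) ->
    lp_seq p (fun t => nx (cl_x f M mu w t)) /\
    lp_seq p (fun t => nu (cl_u f M mu w t)).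
Proof.
move=> p_ge1 hnx hnu hF _ gM_gt0 hM gbar_gt0 gM_le _ r_ge0 r_lp _ budget w w_lp adm.
pose rho i := if i is 0 then 0 else r i.
have rho_ge0 i : 0 <= rho i by case: i => //= i; exact: r_ge0.
have rho_lp : lp_seq p (fun i => rho i.+1).
  case: r_lp => C hC; exists C => N.
  rewrite (eq_seg_norm p (h := fun i => `|r i.+1|)); first exact: hC.
  by move=> t _; rewrite ger0_norm ?r_ge0.
have D_ge0 : 0 <= 4 * (gbar + 1) * (`|gF| + 1).
  by have := normr_ge0 gF; rewrite !mulr_ge0 //; lra.
have budget_rho i : (1 <= i)%N -> gF * (gM i + 1) * eps i <= rho i.
  by case: i => // i; exact: budget.
have bound := cl_window_bound p_ge1 hnx hnu hF hM (fun i => ltW (gM_gt0 i)) gM_le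
  rho_ge0 budget_rho adm.
have start_le N : (cl_start f M mu w N <= N)%N by case: (cl_window f M mu w N).
have start_prev N : cl_start f M mu w N = 0%N \/
    (cl_index f M mu w (cl_start f M mu w N).-1).+1 = cl_index f M mu w N.
  by case: (cl_window f M mu w N).
have lp_of_bound v : (forall t, 0 <= v t) ->
    (forall N, seg_norm p v (cl_start f M mu w N) N <=
       2 * rho (cl_index f M mu w N) +
       4 * (gbar + 1) * (`|gF| + 1) * seg_norm p (fun t => nx (w t)) (cl_start f M mu w N) N) ->
    lp_seq p v.
  move=> v_ge0 win.
  exact: (lp_seq_of_window_bounds D_ge0 v_ge0 rho_ge0 (erefl _) start_le start_prev
    p_ge1 win w_lp rho_lp).
split; apply: lp_of_bound => [t|N]; rewrite ?vnorm_ge0 //; by case: (bound N).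
Qed.
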